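(* (a) The cell $S_{z_2,z_2}$ is the disjoint union of exactly three $G$-orbits of points $(P,Pz_2,Pz_2n)$: $n=n(0,0,1)$, dimension $7$, stabilizer $\{d(1/a^2,a,a):a\in\mathbb{R}^\times\}$; $n=n(0,1,0)$, dimension $6$, stabilizer $\left\{\begin{pmatrix}a&z&0\\0&1/a^2&0\\0&0&a\end{pmatrix}:a\in\mathbb{R}^\times,z\in\mathbb{R}\right\}$; $n=n(0,0,0)$, dimension $5$, stabilizer $D\cdot\{n(x,0,0):x\in\mathbb{R}\}$. (b) The cell $S_{z_2,s_1}$ is a single $G$-orbit, that of $(P,Pz_2,Ps_1)$, of dimension $6$ with stabilizer $D$; the cell $S_{z_2,1}$ is a single $G$-orbit, that of $(P,Pz_2,P)$, of dimension $5$ with stabilizer $D\cdot\{n(x,0,0):x\in\mathbb{R}\}$. (c) The cell $S_{z_2,s_2}$ is the disjoint union of exactly two $G$-orbits of points $(P,Pz_2,Ps_2n)$: $n=n(0,0,1)$, dimension $6$, stabilizer $\left\{\begin{pmatrix}1/a^2&x&0\\0&a&0\\0&0&a\end{pmatrix}:a\in\mathbb{R}^\times,x\in\mathbb{R}\right\}$; $n=n(0,0,0)$, dimension $5$, stabilizer $D\cdot\{n(x,0,0):x\in\mathbb{R}\}$.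
   Context: $G=\mathrm{SL}_3(\mathbb{R})$, $P$ the upper triangular matrices in $G$, $D$ the diagonal matrices in $G$; $G$ acts on $X=(P\backslash G)^3$ by right multiplication in each coordinate. $n(x,y,z)=\begin{pmatrix}1&x&y\\0&1&z\\0&0&1\end{pmatrix}$, $d(a,b,c)=\operatorname{diag}(a,b,c)$. $1$ is the identity matrix, $s_1=\begin{pmatrix}0&1&0\\1&0&0\\0&0&-1\end{pmatrix}$, $s_2=\begin{pmatrix}-1&0&0\\0&0&1\\0&1&0\end{pmatrix}$, $z_2=\begin{pmatrix}0&0&1\\-1&0&0\\0&-1&0\end{pmatrix}$. $S_{v,w}=\big(\{P\}\times P\backslash PvP\times P\backslash PwP\big)\cdot G$. The stabilizer of $(P,Pv,Pwn)$ is $P\cap v^{-1}Pv\cap (wn)^{-1}P(wn)$. *)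

From HB Require Import structures.
From mathcomp Require Import all_boot all_order all_algebra.
From mathcomp Require Import reals.
Set Implicit Arguments. Unset Strict Implicit. Unset Printing Implicit Defensive.
Import Order.TTheory GRing.Theory Num.Theory.
Local Open Scope ring_scope.

Section Defs.
Variable R : realType.

Definition mx3 (a b c d e f g h k : R) : 'M[R]_3 :=
  \matrix_(i < 3, j < 3)
    match nat_of_ord i, nat_of_ord j with
    | 0, 0 => a | 0, 1 => b | 0, _ => c
    | 1, 0 => d | 1, 1 => e | 1, _ => f
    | _, 0 => g | _, 1 => h | _, _ => k
    end.

Definition nmx (x y z : R) : 'M[R]_3 := mx3 1 x y 0 1 z 0 0 1.
Definition dmx (a b c : R) : 'M[R]_3 := mx3 a 0 0 0 b 0 0 0 c.

Definition s1 : 'M[R]_3 := mx3 0 1 0 1 0 0 0 0 (-1).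
Definition s2 : 'M[R]_3 := mx3 (-1) 0 0 0 0 1 0 1 0.
Definition z2 : 'M[R]_3 := mx3 0 0 1 (-1) 0 0 0 (-1) 0.

Definition inG (g : 'M[R]_3) : Prop := \det g = 1.
Definition upper (g : 'M[R]_3) : Prop := forall i j : 'I_3, (j < i)%N -> g i j = 0.
Definition inP (g : 'M[R]_3) : Prop := inG g /\ upper g.
Definition inD (g : 'M[R]_3) : Prop := exists a b c : R, a * b * c = 1 /\ g = dmx a b c.
Definition inPvP (v g : 'M[R]_3) : Prop :=
  exists p q, inP p /\ inP q /\ g = p *m v *m q.

(* A point of X = (P\G)^3 is represented by a triple (g1,g2,g3) of elements of G,
   standing for (P g1, P g2, P g3). *)
Definition trip := ('M[R]_3 * 'M[R]_3 * 'M[R]_3)%type.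
Definition t1 (x : trip) := x.1.1.
Definition t2 (x : trip) := x.1.2.
Definition t3 (x : trip) := x.2.
Definition is_pt (x : trip) : Prop := inG (t1 x) /\ inG (t2 x) /\ inG (t3 x).

(* P a = P b  iff  a b^-1 in P *)
Definition same_coset (a b : 'M[R]_3) : Prop := inP (a *m invmx b).
Definition same_pt (x y : trip) : Prop :=
  same_coset (t1 x) (t1 y) /\ same_coset (t2 x) (t2 y) /\ same_coset (t3 x) (t3 y).
Definition act (x : trip) (g : 'M[R]_3) : trip := (t1 x *m g, t2 x *m g, t3 x *m g).
Definition same_orbit (x y : trip) : Prop := exists g, inG g /\ same_pt (act x g) y.
Definition stab (x : trip) (g : 'M[R]_3) : Prop := inG g /\ same_pt (act x g) x.
Definition base_pt (a b : 'M[R]_3) : trip := (1%:M, a, b).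
(* the cell S_{v,w} = ({P} x P\PvP x P\PwP) . G *)
Definition in_cell (v w : 'M[R]_3) (x : trip) : Prop :=
  exists a b g, inPvP v a /\ inPvP w b /\ inG g /\ same_pt x (act (base_pt a b) g).

(* Lie algebra of the stabilizer of x: the stabilizer is the intersection of the
   conjugates g_i^-1 P g_i, so its Lie algebra is the set of traceless X with
   g_i X g_i^-1 upper triangular for i = 1,2,3. *)
Definition stab_lie (x : trip) (X : 'M[R]_3) : Prop :=
  \tr X = 0 /\ upper (t1 x *m X *m invmx (t1 x))
  /\ upper (t2 x *m X *m invmx (t2 x)) /\ upper (t3 x *m X *m invmx (t3 x)).
(* The G-orbit of x has dimension d: dim G (= 8) = d + dim Lie(Stab x). *)
Definition orbit_dim (x : trip) (d : nat) : Prop :=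
  exists U : {vspace 'M[R]_3},
    (forall X, X \in U <-> stab_lie x X) /\ (\dim U + d = 8)%N.

End Defs.

From HB Require Import structures.
From mathcomp Require Import all_boot all_order all_algebra.
From mathcomp Require Import reals.
From mathcomp Require Import ring lra.
Set Implicit Arguments. Unset Strict Implicit. Unset Printing Implicit Defensive.
Import Order.TTheory GRing.Theory Num.Theory.
Local Open Scope ring_scope.

(* The stabilizer of (P, Pz2) is B = P ∩ z2^-1 P z2 = D·{n(x,0,0)}, the matrices
   [dnmx a b e k] with a e k = 1. Acting by G, every point of S_{z2,w} becomes
   (P, Pz2, Pwr) with r in P, so the G-orbits in the cell are the B-orbits on P\PwP:
   (P, Pz2, Pw) and (P, Pz2, Pw') lie in one orbit iff w g w'^-1 is upper triangular
   for some g in B. Right multiplication by B normalises r to one of the listed n, and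
   two different representatives could only be connected by a g in B with vanishing
   (3,3)-entry. The stabilizer of (P, Pz2, Pw) is B ∩ w^-1 P w, cut out of B by linear
   conditions on the entries; the same conditions with a e k = 1 replaced by
   a + e + k = 0 describe its Lie algebra, whose dimension is read off a basis. *)

Lemma mul3_eq1_neq0 (R : nzRingType) (a e k : R) :
  a * e * k = 1 -> [/\ a != 0, e != 0 & k != 0].
Proof.
by move=> D; split; apply: contra_eq_neq D => ->; rewrite ?(mulr0, mul0r) eq_sym oner_neq0.
Qed.

Section Mx3.
Variable R : realType.
Local Notation M := 'M[R]_3.
Local Notation i0 := (@Ordinal 3 0 isT).
Local Notation i1 := (@Ordinal 3 1 isT).
Local Notation i2 := (@Ordinal 3 2 isT).

Lemma mx3_onto (A : M) : exists a b c d e f g h k, A = mx3 a b c d e f g h k.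
Proof.
exists (A i0 i0), (A i0 i1), (A i0 i2), (A i1 i0), (A i1 i1), (A i1 i2),
  (A i2 i0), (A i2 i1), (A i2 i2).
apply/matrixP => i j; rewrite !mxE.
by case: i => [[|[|[|//]]] ?]; case: j => [[|[|[|//]]] ?]; congr (A _ _); apply: val_inj.
Qed.

Lemma mx3_inj (a b c d e f g h k a' b' c' d' e' f' g' h' k' : R) :
  mx3 a b c d e f g h k = mx3 a' b' c' d' e' f' g' h' k' ->
  [/\ a = a', b = b', c = c', d = d' & [/\ e = e', f = f', g = g', h = h' & k = k']].
Proof.
move/matrixP => E.
move: (E i0 i0) (E i0 i1) (E i0 i2) (E i1 i0) (E i1 i1) (E i1 i2) (E i2 i0) (E i2 i1) (E i2 i2).
by rewrite !mxE.
Qed.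

Lemma mx3_1 : 1%:M = mx3 1 0 0 0 1 0 0 0 1 :> M.
Proof.
by apply/matrixP => i j; rewrite !mxE; case: i => [[|[|[|//]]] ?]; case: j => [[|[|[|//]]] ?].
Qed.

Lemma mx3_0 : 0 = mx3 0 0 0 0 0 0 0 0 0 :> M.
Proof.
by apply/matrixP => i j; rewrite !mxE; case: i => [[|[|[|//]]] ?]; case: j => [[|[|[|//]]] ?].
Qed.

Lemma add_mx3 (a b c d e f g h k a' b' c' d' e' f' g' h' k' : R) :
  mx3 a b c d e f g h k + mx3 a' b' c' d' e' f' g' h' k' =
  mx3 (a + a') (b + b') (c + c') (d + d') (e + e') (f + f') (g + g') (h + h') (k + k').
Proof.
by apply/matrixP => i j; rewrite !mxE; case: i => [[|[|[|//]]] ?]; case: j => [[|[|[|//]]] ?].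
Qed.

Lemma scale_mx3 (r a b c d e f g h k : R) :
  r *: mx3 a b c d e f g h k =
  mx3 (r * a) (r * b) (r * c) (r * d) (r * e) (r * f) (r * g) (r * h) (r * k).
Proof.
by apply/matrixP => i j; rewrite !mxE; case: i => [[|[|[|//]]] ?]; case: j => [[|[|[|//]]] ?].
Qed.

Lemma mul_mx3 (a b c d e f g h k a' b' c' d' e' f' g' h' k' : R) :
  mx3 a b c d e f g h k *m mx3 a' b' c' d' e' f' g' h' k' =
  mx3 (a * a' + b * d' + c * g') (a * b' + b * e' + c * h') (a * c' + b * f' + c * k')
      (d * a' + e * d' + f * g') (d * b' + e * e' + f * h') (d * c' + e * f' + f * k')
      (g * a' + h * d' + k * g') (g * b' + h * e' + k * h') (g * c' + h * f' + k * k').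
Proof.
apply/matrixP => i j; rewrite !mxE !big_ord_recr big_ord0 /= !mxE /=.
by case: i => [[|[|[|//]]] ?]; case: j => [[|[|[|//]]] ?] /=; ring.
Qed.

Lemma det_mx3 (a b c d e f g h k : R) :
  \det (mx3 a b c d e f g h k) =
  a * e * k - a * f * h - b * d * k + b * f * g + c * d * h - c * e * g.
Proof.
rewrite (expand_det_row _ i0) !big_ord_recr big_ord0 /= /cofactor !mxE /=.
rewrite !(expand_det_row _ ord0) !big_ord_recr big_ord0 /= /cofactor !mxE /=.
by rewrite !big_ord0 /= !det_mx11 !mxE /=; ring.
Qed.

Lemma trace_mx3 (a b c d e f g h k : R) : \tr (mx3 a b c d e f g h k) = a + e + k.
Proof. by rewrite /mxtrace !big_ord_recr big_ord0 /= !mxE /= add0r. Qed.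

Lemma upper_mx3 (a b c d e f g h k : R) :
  upper (mx3 a b c d e f g h k) <-> [/\ d = 0, g = 0 & h = 0].
Proof.
split=> [U | [-> -> ->] i j].
  by move: (U i1 i0 isT) (U i2 i0 isT) (U i2 i1 isT); rewrite !mxE.
by rewrite mxE; case: i => [[|[|[|//]]] ?]; case: j => [[|[|[|//]]] ?].
Qed.

End Mx3.

Section SpanCoords.
Variables (K : fieldType) (vT : vectType K).
Implicit Types u v w x : vT.

Lemma memv_span2 u v x : x \in <<[:: u; v]>>%VS <-> exists k1 k2, x = k1 *: u + k2 *: v.
Proof.
rewrite span_cons span_seq1; split=> [/memv_addP [_ /vlineP [k1 ->] [_ /vlineP [k2 ->] ->]] |].
  by exists k1, k2.
by case=> k1 [k2 ->]; apply: memv_add; apply: memvZ (memv_line _).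
Qed.

Lemma memv_span3 u v w x :
  x \in <<[:: u; v; w]>>%VS <-> exists k1 k2 k3, x = k1 *: u + k2 *: v + k3 *: w.
Proof.
rewrite span_cons; split=> [/memv_addP [_ /vlineP [k1 ->] [_ /memv_span2 [k2 [k3 ->]] ->]] |].
  by exists k1, k2, k3; rewrite addrA.
case=> k1 [k2 [k3 ->]]; rewrite -addrA; apply: memv_add; first exact: memvZ (memv_line _).
by apply/memv_span2; exists k2, k3.
Qed.

Lemma free2 u v : (forall k1 k2, k1 *: u + k2 *: v = 0 -> k1 = 0 /\ k2 = 0) -> free [:: u; v].
Proof.
move=> indep; apply/(@freeP _ _ _ (in_tuple [:: u; v])) => k.
rewrite !big_ord_recr big_ord0 /= add0r => /indep [k0 k1] [[|[|//]] ?].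
- by rewrite -k0; congr k; apply: val_inj.
- by rewrite -k1; congr k; apply: val_inj.
Qed.

Lemma free3 u v w :
  (forall k1 k2 k3, k1 *: u + k2 *: v + k3 *: w = 0 -> [/\ k1 = 0, k2 = 0 & k3 = 0]) ->
  free [:: u; v; w].
Proof.
move=> indep; apply/(@freeP _ _ _ (in_tuple [:: u; v; w])) => k.
rewrite !big_ord_recr big_ord0 /= add0r => /indep [k0 k1 k2] [[|[|[|//]]] ?].
- by rewrite -k0; congr k; apply: val_inj.
- by rewrite -k1; congr k; apply: val_inj.
- by rewrite -k2; congr k; apply: val_inj.
Qed.

End SpanCoords.

Lemma mulmx1_invmx (K : comUnitRingType) n (A B : 'M[K]_n) : A *m B = 1%:M -> invmx A = B.
Proof. by move=> AB; have [uA _] := mulmx1_unit AB; rewrite -[B](mulKmx uA) AB mulmx1. Qed.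

Section SL3.
Variable R : realType.
Local Notation M := 'M[R]_3.
Implicit Types (a b c g h p r : M) (x y z : trip R).

Lemma inG_unit a : inG a -> a \in unitmx.
Proof. by rewrite /inG unitmxE => ->; rewrite unitr1. Qed.

Lemma inG1 : inG (1%:M : M).
Proof. exact: det1. Qed.

Lemma inG_mul a b : inG a -> inG b -> inG (a *m b).
Proof. by rewrite /inG det_mulmx => -> ->; rewrite mulr1. Qed.

Lemma inG_inv a : inG a -> inG (invmx a).
Proof. by rewrite /inG det_inv => ->; rewrite invr1. Qed.

Lemma inP_coords r :
  inP r <-> exists a b c e f k : R, a * e * k = 1 /\ r = mx3 a b c 0 e f 0 0 k.
Proof.
split=> [[] | [a [b [c [e [f [k [D ->]]]]]]]].
  have [a [b [c [d [e [f [g [h [k ->]]]]]]]]] := mx3_onto r.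
  rewrite /inG det_mx3 => D /upper_mx3 [d0 g0 h0]; subst.
  by exists a, b, c, e, f, k; split=> //; rewrite -D; ring.
by split; [rewrite /inG det_mx3 -D; ring | apply/upper_mx3].
Qed.

Lemma upper_mul a b : upper a -> upper b -> upper (a *m b).
Proof.
move=> Ua Ub i j ji; rewrite mxE; apply: big1 => k _.
have [ki | ik] := ltnP k i; first by rewrite Ua ?mul0r.
by rewrite Ub ?mulr0 // (leq_trans ji ik).
Qed.

Lemma inP1 : inP (1%:M : M).
Proof. by split; [exact: inG1 | rewrite mx3_1; apply/upper_mx3]. Qed.

Lemma inP_mul a b : inP a -> inP b -> inP (a *m b).
Proof. by case=> Ga Ua [Gb Ub]; split; [exact: inG_mul | exact: upper_mul]. Qed.

Lemma inP_inv r : inP r -> inP (invmx r).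
Proof.
case/inP_coords=> a [b [c [e [f [k [D ->]]]]]]; apply/inP_coords.
exists (e * k), (- (b * k)), (b * f - c * e), (a * k), (- (a * f)), (a * e).
split; first by transitivity ((a * e * k) ^+ 2); [ring | rewrite D expr1n].
by apply: mulmx1_invmx; rewrite mul_mx3 mx3_1; congr mx3; rewrite -?D; ring.
Qed.

Lemma same_coset_upper a b : inG a -> inG b -> same_coset a b <-> upper (a *m invmx b).
Proof. by move=> Ga Gb; split=> [[] | U] //; split=> //; apply/inG_mul/inG_inv. Qed.

Lemma same_cosetP a b : inG b -> same_coset a b <-> exists2 p, inP p & a = p *m b.
Proof.
move=> /inG_unit ub; split=> [S | [p Pp ->]]; last by rewrite /same_coset mulmxK.
by exists (a *m invmx b); rewrite ?mulmxKV.
Qed.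

Lemma same_coset_refl a : inG a -> same_coset a a.
Proof. by move=> Ga; apply/(same_cosetP _ Ga); exists 1%:M; rewrite ?mul1mx //; exact: inP1. Qed.

Lemma same_coset_trans a b c : inG b -> inG c ->
  same_coset a b -> same_coset b c -> same_coset a c.
Proof.
move=> Gb Gc /(same_cosetP _ Gb) [p Pp ->] /(same_cosetP _ Gc) [q Pq ->].
by apply/(same_cosetP _ Gc); exists (p *m q); rewrite ?mulmxA //; exact: inP_mul.
Qed.

Lemma same_coset_mulr a b h : inG b -> inG h ->
  same_coset a b -> same_coset (a *m h) (b *m h).
Proof.
move=> Gb Gh /(same_cosetP _ Gb) [p Pp ->].
by apply/same_cosetP; [exact: inG_mul | exists p; rewrite ?mulmxA].
Qed.

Lemma is_pt_base a b : inG a -> inG b -> is_pt (base_pt a b).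
Proof. by split; [exact: inG1 | split]. Qed.

Lemma is_pt_act x g : is_pt x -> inG g -> is_pt (act x g).
Proof. by case=> [? [? ?]] Gg; split; [|split]; exact: inG_mul. Qed.

Lemma act_mul x g h : act (act x g) h = act x (g *m h).
Proof. by rewrite /act /t1 /t2 /t3 /= !mulmxA. Qed.

Lemma act1 x : act x 1%:M = x.
Proof. by case: x => [[? ?] ?]; rewrite /act /t1 /t2 /t3 /= !mulmx1. Qed.

Lemma same_pt_refl x : is_pt x -> same_pt x x.
Proof. by case=> [? [? ?]]; split; [|split]; exact: same_coset_refl. Qed.

Lemma same_pt_trans x y z : is_pt y -> is_pt z -> same_pt x y -> same_pt y z -> same_pt x z.
Proof.
case=> [Gy1 [Gy2 Gy3]] [Gz1 [Gz2 Gz3]] [S1 [S2 S3]] [T1 [T2 T3]].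
split; first exact: same_coset_trans Gy1 Gz1 S1 T1.
by split; [exact: same_coset_trans Gy2 Gz2 S2 T2 | exact: same_coset_trans Gy3 Gz3 S3 T3].
Qed.

Lemma same_pt_act x y g : is_pt y -> inG g -> same_pt x y -> same_pt (act x g) (act y g).
Proof. by case=> [? [? ?]] Gg [? [? ?]]; split; [|split]; exact: same_coset_mulr. Qed.

Lemma same_pt_orbit x y : same_pt x y -> same_orbit x y.
Proof. by exists 1%:M; rewrite act1; split=> //; exact: inG1. Qed.

Lemma same_orbit_act x g : is_pt x -> inG g -> same_orbit (act x g) x.
Proof.
move=> px Gg; exists (invmx g); split; first exact: inG_inv.
by rewrite act_mul mulmxV ?inG_unit // act1; exact: same_pt_refl.
Qed.

Lemma same_orbit_trans x y z : is_pt y -> is_pt z ->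
  same_orbit x y -> same_orbit y z -> same_orbit x z.
Proof.
move=> py pz [g [Gg Sg]] [h [Gh Sh]]; exists (g *m h); split; first exact: inG_mul.
rewrite -act_mul; apply: same_pt_trans Sh; [exact: is_pt_act | exact: pz |].
exact: same_pt_act.
Qed.

Lemma same_orbit_double_coset v w p1 q1 p2 q2 : inG v -> inG w ->
  inP p1 -> inP q1 -> inP p2 -> inP q2 ->
  same_orbit (base_pt (p1 *m v *m q1) (p2 *m w *m q2)) (base_pt v (w *m (q2 *m invmx q1))).
Proof.
move=> Gv Gw P1 Q1 P2 [Gq2 _]; have [Gq1 _] := Q1.
have Gwq : inG (w *m q2 *m invmx q1) by do 2?apply: inG_mul => //; exact: inG_inv.
exists (invmx q1); split; first exact: inG_inv.
rewrite /act /base_pt /t1 /t2 /t3 /= mul1mx mulmxK ?inG_unit // !mulmxA.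
split; [|split].
- by apply/same_cosetP; [exact: inG1 | exists (invmx q1); rewrite ?mulmx1 //; exact: inP_inv].
- by apply/same_cosetP => //; exists p1.
- by apply/same_cosetP => //; exists p2; rewrite //= !mulmxA.
Qed.

Lemma in_cellP v w x : inG v -> inG w -> is_pt x ->
  in_cell v w x <-> exists2 r, inP r & same_orbit x (base_pt v (w *m r)).
Proof.
move=> Gv Gw px; split.
  case=> _ [_ [g [[p1 [q1 [P1 [Q1 ->]]]] [[p2 [q2 [P2 [Q2 ->]]]] [Gg Sx]]]]].
  have [[Gp1 _] [Gq1 _] [Gp2 _] [Gq2 _]] := And4 P1 Q1 P2 Q2.
  have Pr : inP (q2 *m invmx q1) by apply: inP_mul => //; exact: inP_inv.
  have py : is_pt (base_pt (p1 *m v *m q1) (p2 *m w *m q2)).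
    by apply: is_pt_base; do 2?apply: inG_mul.
  have pr : is_pt (base_pt v (w *m (q2 *m invmx q1))).
    by apply: is_pt_base => //; apply: inG_mul => //; case: Pr.
  exists (q2 *m invmx q1) => //.
  apply: same_orbit_trans (same_pt_orbit Sx) _; [exact: is_pt_act | exact: pr |].
  exact: same_orbit_trans py pr (same_orbit_act py Gg) (same_orbit_double_coset _ _ _ _ _ _).
case=> r Pr [g [Gg Sg]].
exists v, (w *m r), (invmx g); split.
  by exists 1%:M, 1%:M; rewrite mul1mx mulmx1; split; [exact: inP1 | split; [exact: inP1 |]].
split; first by exists 1%:M, r; rewrite mul1mx; split; [exact: inP1 | split].
split; first exact: inG_inv.
rewrite -[X in same_pt X _]act1 -(mulmxV (inG_unit Gg)) -act_mul.
by apply: same_pt_act; [apply: is_pt_base => //; exact: inG_mul Gw Pr.1 | exact: inG_inv |].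
Qed.

Lemma orbit_dim_span x (s : seq M) d : free s -> (size s + d = 8)%N ->
  (forall X, stab_lie x X <-> X \in <<s>>%VS) -> orbit_dim x d.
Proof. by move=> /eqP dim_s sd E; exists <<s>>%VS; split=> [X | ]; rewrite ?E // dim_s. Qed.

End SL3.

Section Z2Cells.
Variable R : realType.
Local Notation M := 'M[R]_3.
Local Notation zz1 := (base_pt (z2 R) (z2 R *m nmx 0 0 1)).
Local Notation zz2 := (base_pt (z2 R) (z2 R *m nmx 0 1 0)).
Local Notation zz3 := (base_pt (z2 R) (z2 R *m nmx 0 0 0)).
Local Notation zs := (base_pt (z2 R) (s1 R)).
Local Notation z1 := (base_pt (z2 R) 1%:M).
Local Notation zt1 := (base_pt (z2 R) (s2 R *m nmx 0 0 1)).
Local Notation zt2 := (base_pt (z2 R) (s2 R *m nmx 0 0 0)).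

Definition dnmx (a b e k : R) : M := mx3 a b 0 0 e 0 0 0 k.

Lemma dnmx_inj (a b e k a' b' e' k' : R) :
  dnmx a b e k = dnmx a' b' e' k' -> [/\ a = a', b = b', e = e' & k = k'].
Proof. by case/mx3_inj=> -> -> _ _ [-> _ _ _ ->]. Qed.

Lemma dnmx0 : 0 = dnmx 0 0 0 0.
Proof. exact: mx3_0. Qed.

Lemma add_dnmx (a b e k a' b' e' k' : R) :
  dnmx a b e k + dnmx a' b' e' k' = dnmx (a + a') (b + b') (e + e') (k + k').
Proof. by rewrite /dnmx add_mx3 !addr0. Qed.

Lemma scale_dnmx (c a b e k : R) : c *: dnmx a b e k = dnmx (c * a) (c * b) (c * e) (c * k).
Proof. by rewrite /dnmx scale_mx3 !mulr0. Qed.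

Lemma det_dnmx (a b e k : R) : \det (dnmx a b e k) = a * e * k.
Proof. by rewrite det_mx3; ring. Qed.

Lemma trace_dnmx (a b e k : R) : \tr (dnmx a b e k) = a + e + k.
Proof. exact: trace_mx3. Qed.

Lemma DN_dnmx g : (exists d x, inD d /\ g = d *m nmx x 0 0) <->
  exists a b e k : R, a * e * k = 1 /\ g = dnmx a b e k.
Proof.
split=> [[_ [x [[a [e [k [D ->]]]] ->]]] | [a [b [e [k [D ->]]]]]].
  by exists a, (a * x), e, k; split=> //; rewrite /dmx /nmx mul_mx3; congr mx3; ring.
have a0 : a != 0 by apply: contra_eq_neq D => ->; rewrite !mul0r eq_sym oner_neq0.
exists (dmx a e k), (b / a); split; first by exists a, e, k.
by rewrite /dmx /nmx mul_mx3; congr mx3; field.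
Qed.

Lemma inG_z2 : inG (z2 R). Proof. by rewrite /inG det_mx3; ring. Qed.
Lemma inG_s1 : inG (s1 R). Proof. by rewrite /inG det_mx3; ring. Qed.
Lemma inG_s2 : inG (s2 R). Proof. by rewrite /inG det_mx3; ring. Qed.

Lemma inP_nmx (x y z : R) : inP (nmx x y z).
Proof. by apply/inP_coords; exists 1, x, y, 1, z, 1; rewrite !mul1r. Qed.

Lemma inG_z2nmx x y z : inG (z2 R *m nmx x y z).
Proof. by apply: inG_mul; [exact: inG_z2 | case: (inP_nmx x y z)]. Qed.

Lemma inG_s2nmx x y z : inG (s2 R *m nmx x y z).
Proof. by apply: inG_mul; [exact: inG_s2 | case: (inP_nmx x y z)]. Qed.

Lemma is_pt_z2 w : inG w -> is_pt (base_pt (z2 R) w).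
Proof. exact/is_pt_base/inG_z2. Qed.

Lemma invmx_z2 : invmx (z2 R) = mx3 0 (-1) 0 0 0 (-1) 1 0 0.
Proof. by apply: mulmx1_invmx; rewrite mul_mx3 mx3_1; congr mx3; ring. Qed.

Lemma invmx_s1 : invmx (s1 R) = s1 R.
Proof. by apply: mulmx1_invmx; rewrite mul_mx3 mx3_1; congr mx3; ring. Qed.

Lemma invmx_s2 : invmx (s2 R) = s2 R.
Proof. by apply: mulmx1_invmx; rewrite mul_mx3 mx3_1; congr mx3; ring. Qed.

Lemma invmx_nmx (x y z : R) : invmx (nmx x y z) = nmx (- x) (x * z - y) (- z).
Proof. by apply: mulmx1_invmx; rewrite mul_mx3 mx3_1; congr mx3; ring. Qed.

Lemma invmx_mul_nmx w (x y z : R) : inG w ->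
  invmx (w *m nmx x y z) = nmx (- x) (x * z - y) (- z) *m invmx w.
Proof.
move=> Gw; have [Gn _] := inP_nmx x y z.
apply: mulmx1_invmx; rewrite -mulmxA (mulmxA (nmx x y z)) -invmx_nmx.
by rewrite mulmxV ?inG_unit // mul1mx mulmxV ?inG_unit.
Qed.

Ltac mx3_expand :=
  rewrite ?invmx1 ?invmx_mul_nmx ?invmx_z2 ?invmx_s1 ?invmx_s2 ?mul1mx ?mulmx1;
  try (exact: inG_z2 || exact: inG_s2);
  rewrite /z2 /s1 /s2 /nmx /dmx /dnmx ?mx3_1 ?mul_mx3.

Lemma upper_conj_z2 X : upper X /\ upper (z2 R *m X *m invmx (z2 R)) <->
  exists a b e k, X = dnmx a b e k.
Proof.
split=> [| [a [b [e [k ->]]]]]; last by mx3_expand; split; apply/upper_mx3; split; ring.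
have [a [b [c [d [e [f [g [h [k ->]]]]]]]]] := mx3_onto X.
mx3_expand; case=> /upper_mx3 [-> -> ->] /upper_mx3 [c0 f0 _].
by exists a, b, e, k; congr mx3; lra.
Qed.

Lemma same_pt_z2P w w' g : inG w -> inG w' -> inG g ->
  same_pt (act (base_pt (z2 R) w) g) (base_pt (z2 R) w') <->
  (exists a b e k, g = dnmx a b e k) /\ upper (w *m g *m invmx w').
Proof.
move=> Gw Gw' Gg; rewrite /same_pt /act /t1 /t2 /t3 /= -upper_conj_z2.
have [G1 Gz] := (@inG1 R, inG_z2).
rewrite !same_coset_upper ?mul1mx ?invmx1 ?mulmx1 //; try exact: inG_mul.
by split=> [[U1 [U2 U3]] | [[U1 U2] U3]].
Qed.

Lemma same_orbit_z2P w w' : inG w -> inG w' ->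
  same_orbit (base_pt (z2 R) w) (base_pt (z2 R) w') <->
  exists a b e k, a * e * k = 1 /\ upper (w *m dnmx a b e k *m invmx w').
Proof.
move=> Gw Gw'; split=> [[g [Gg]] | [a [b [e [k [D U]]]]]].
  case/same_pt_z2P=> // [[a [b [e [k E]]]] U]; exists a, b, e, k.
  by move: Gg; rewrite /inG E det_dnmx -E.
have Gg : inG (dnmx a b e k) by rewrite /inG det_dnmx.
by exists (dnmx a b e k); split=> //; apply/same_pt_z2P => //; split=> //; exists a, b, e, k.
Qed.

Lemma stab_z2P w g : inG w -> stab (base_pt (z2 R) w) g <->
  exists a b e k, [/\ a * e * k = 1, g = dnmx a b e k & upper (w *m g *m invmx w)].
Proof.
move=> Gw; split=> [[Gg] | [a [b [e [k [D E U]]]]]].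
  case/same_pt_z2P=> // [[a [b [e [k E]]]] U]; exists a, b, e, k.
  by split=> //; move: Gg; rewrite /inG E det_dnmx.
have Gg : inG g by rewrite /inG E det_dnmx.
by split=> //; apply/same_pt_z2P => //; split=> //; exists a, b, e, k.
Qed.

Lemma stab_lie_z2P w X : stab_lie (base_pt (z2 R) w) X <->
  exists a b e k, [/\ a + e + k = 0, X = dnmx a b e k & upper (w *m X *m invmx w)].
Proof.
rewrite /stab_lie /t1 /t2 /t3 /= invmx1 mul1mx mulmx1.
split=> [[T [U1 [U2 U3]]] | [a [b [e [k [T E U]]]]]].
  have [a [b [e [k E]]]] := (upper_conj_z2 X).1 (conj U1 U2).
  by exists a, b, e, k; split=> //; rewrite -T E trace_dnmx.
have [U1 U2] : upper X /\ upper (z2 R *m X *m invmx (z2 R)).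
  by apply/upper_conj_z2; exists a, b, e, k.
by rewrite E trace_dnmx -E.
Qed.

Lemma upper_conj_z2n001 (a b e k : R) :
  upper (z2 R *m nmx 0 0 1 *m dnmx a b e k *m invmx (z2 R *m nmx 0 0 1)) <-> b = 0 /\ k = e.
Proof.
mx3_expand; split=> [/upper_mx3 [? ? ?] | [-> ->]]; first by split; lra.
by apply/upper_mx3; split; ring.
Qed.

Lemma upper_conj_z2n010 (a b e k : R) :
  upper (z2 R *m nmx 0 1 0 *m dnmx a b e k *m invmx (z2 R *m nmx 0 1 0)) <-> k = a.
Proof.
mx3_expand; split=> [/upper_mx3 [? ? ?] | ->]; first by lra.
by apply/upper_mx3; split; ring.
Qed.

Lemma upper_conj_z2n000 (a b e k : R) :
  upper (z2 R *m nmx 0 0 0 *m dnmx a b e k *m invmx (z2 R *m nmx 0 0 0)).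
Proof. by mx3_expand; apply/upper_mx3; split; ring. Qed.

Lemma upper_conj_s1 (a b e k : R) :
  upper (s1 R *m dnmx a b e k *m invmx (s1 R)) <-> b = 0.
Proof.
mx3_expand; split=> [/upper_mx3 [? ? ?] | ->]; first by lra.
by apply/upper_mx3; split; ring.
Qed.

Lemma upper_conj_1 (a b e k : R) : upper (1%:M *m dnmx a b e k *m invmx 1%:M).
Proof. by mx3_expand; apply/upper_mx3. Qed.

Lemma upper_conj_s2n001 (a b e k : R) :
  upper (s2 R *m nmx 0 0 1 *m dnmx a b e k *m invmx (s2 R *m nmx 0 0 1)) <-> k = e.
Proof.
mx3_expand; split=> [/upper_mx3 [? ? ?] | ->]; first by lra.
by apply/upper_mx3; split; ring.
Qed.

Lemma upper_conj_s2n000 (a b e k : R) :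
  upper (s2 R *m nmx 0 0 0 *m dnmx a b e k *m invmx (s2 R *m nmx 0 0 0)).
Proof. by mx3_expand; apply/upper_mx3; split; ring. Qed.

Lemma stab_z2_full w g : inG w -> (forall a b e k, upper (w *m dnmx a b e k *m invmx w)) ->
  stab (base_pt (z2 R) w) g <-> exists d x, inD d /\ g = d *m nmx x 0 0.
Proof.
move=> Gw Uw; rewrite stab_z2P // DN_dnmx.
split=> [[a [b [e [k [D E _]]]]] | [a [b [e [k [D E]]]]]]; exists a, b, e, k => //.
by split=> //; rewrite E.
Qed.

Lemma stab_zz1 g : stab zz1 g <-> exists a : R, a != 0 /\ g = dmx (a ^-2) a a.
Proof.
rewrite (stab_z2P _ (inG_z2nmx 0 0 1)).
split=> [[a [b [e [k [D -> /upper_conj_z2n001 [b0 ke]]]]]] | [a [a0 ->]]].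
  subst; have [_ e0 _] := mul3_eq1_neq0 D.
  by exists e; split=> //; rewrite /dnmx /dmx; congr mx3; rewrite -[RHS]mul1r -D; field.
by exists (a ^-2), 0, a, a; split; [field | reflexivity | exact/(upper_conj_z2n001 (a ^-2) 0 a a)].
Qed.

Lemma stab_zz2 g : stab zz2 g <-> exists a z : R, a != 0 /\ g = mx3 a z 0 0 (a ^-2) 0 0 0 a.
Proof.
rewrite (stab_z2P _ (inG_z2nmx 0 1 0)).
split=> [[a [b [e [k [D -> /upper_conj_z2n010 ka]]]]] | [a [z [a0 ->]]]].
  subst; have [a0 _ _] := mul3_eq1_neq0 D.
  by exists a, b; split=> //; rewrite /dnmx; congr mx3; rewrite -[RHS]mul1r -D; field.
by exists a, z, (a ^-2), a; split; [field | reflexivity | exact/(upper_conj_z2n010 a z (a ^-2) a)].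
Qed.

Lemma stab_zz3 g : stab zz3 g <-> exists d x, inD d /\ g = d *m nmx x 0 0.
Proof. by apply: stab_z2_full; [exact: inG_z2nmx | exact: upper_conj_z2n000]. Qed.

Lemma stab_zs g : stab zs g <-> inD g.
Proof.
rewrite (stab_z2P _ inG_s1).
split=> [[a [b [e [k [D -> /upper_conj_s1 b0]]]]] | [a [e [k [D ->]]]]].
  by subst; exists a, e, k.
by exists a, 0, e, k; split=> //; exact/(upper_conj_s1 a 0 e k).
Qed.

Lemma stab_z1 g : stab z1 g <-> exists d x, inD d /\ g = d *m nmx x 0 0.
Proof. by apply: stab_z2_full; [exact: inG1 | exact: upper_conj_1]. Qed.

Lemma stab_zt1 g : stab zt1 g <-> exists a x : R, a != 0 /\ g = mx3 (a ^-2) x 0 0 a 0 0 0 a.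
Proof.
rewrite (stab_z2P _ (inG_s2nmx 0 0 1)).
split=> [[a [b [e [k [D -> /upper_conj_s2n001 ke]]]]] | [a [x [a0 ->]]]].
  subst; have [_ e0 _] := mul3_eq1_neq0 D.
  by exists e, b; split=> //; rewrite /dnmx; congr mx3; rewrite -[RHS]mul1r -D; field.
by exists (a ^-2), x, a, a; split; [field | reflexivity | exact/(upper_conj_s2n001 (a ^-2) x a a)].
Qed.

Lemma stab_zt2 g : stab zt2 g <-> exists d x, inD d /\ g = d *m nmx x 0 0.
Proof. by apply: stab_z2_full; [exact: inG_s2nmx | exact: upper_conj_s2n000]. Qed.

Lemma orbit_dim_z2_full w : (forall a b e k, upper (w *m dnmx a b e k *m invmx w)) ->
  orbit_dim (base_pt (z2 R) w) 5.
Proof.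
move=> Uw.
apply: (@orbit_dim_span _ _ [:: dnmx 1 0 0 (-1); dnmx 0 0 1 (-1); dnmx 0 1 0 0]) => // [|X].
  by apply: free3 => k1 k2 k3; rewrite !scale_dnmx !add_dnmx dnmx0 => /dnmx_inj [*]; split; lra.
rewrite stab_lie_z2P memv_span3; split=> [[a [b [e [k [T -> _]]]]] | [k1 [k2 [k3 ->]]]].
  by exists a, e, b; rewrite !scale_dnmx !add_dnmx; congr dnmx; lra.
by rewrite !scale_dnmx !add_dnmx; do 4 eexists; split; [| reflexivity | exact: Uw]; ring.
Qed.

Lemma orbit_dim_zz1 : orbit_dim zz1 7.
Proof.
apply: (@orbit_dim_span _ _ [:: dnmx (-2) 0 1 1]) => // [|X].
  by rewrite seq1_free; apply/eqP; rewrite dnmx0 => /dnmx_inj [*]; lra.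
rewrite stab_lie_z2P span_seq1.
split=> [[a [b [e [k [T -> /upper_conj_z2n001 [-> ke]]]]]] | /vlineP [c ->]].
  by apply/vlineP; exists e; rewrite scale_dnmx; congr dnmx; lra.
rewrite scale_dnmx; do 4 eexists; split; [| reflexivity | apply/upper_conj_z2n001; split]; ring.
Qed.

Lemma orbit_dim_zz2 : orbit_dim zz2 6.
Proof.
apply: (@orbit_dim_span _ _ [:: dnmx 1 0 (-2) 1; dnmx 0 1 0 0]) => // [|X].
  by apply: free2 => k1 k2; rewrite !scale_dnmx !add_dnmx dnmx0 => /dnmx_inj [*]; split; lra.
rewrite stab_lie_z2P memv_span2.
split=> [[a [b [e [k [T -> /upper_conj_z2n010 ka]]]]] | [k1 [k2 ->]]].
  by exists a, b; rewrite !scale_dnmx !add_dnmx; congr dnmx; lra.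
rewrite !scale_dnmx !add_dnmx; do 4 eexists; split; [| reflexivity | apply/upper_conj_z2n010]; ring.
Qed.

Lemma orbit_dim_zz3 : orbit_dim zz3 5.
Proof. exact/orbit_dim_z2_full/upper_conj_z2n000. Qed.

Lemma orbit_dim_zs : orbit_dim zs 6.
Proof.
apply: (@orbit_dim_span _ _ [:: dnmx 1 0 0 (-1); dnmx 0 0 1 (-1)]) => // [|X].
  by apply: free2 => k1 k2; rewrite !scale_dnmx !add_dnmx dnmx0 => /dnmx_inj [*]; split; lra.
rewrite stab_lie_z2P memv_span2.
split=> [[a [b [e [k [T -> /upper_conj_s1 ->]]]]] | [k1 [k2 ->]]].
  by exists a, e; rewrite !scale_dnmx !add_dnmx; congr dnmx; lra.
rewrite !scale_dnmx !add_dnmx; do 4 eexists; split; [| reflexivity | apply/upper_conj_s1]; ring.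
Qed.

Lemma orbit_dim_z1 : orbit_dim z1 5.
Proof. exact/orbit_dim_z2_full/upper_conj_1. Qed.

Lemma orbit_dim_zt1 : orbit_dim zt1 6.
Proof.
apply: (@orbit_dim_span _ _ [:: dnmx (-2) 0 1 1; dnmx 0 1 0 0]) => // [|X].
  by apply: free2 => k1 k2; rewrite !scale_dnmx !add_dnmx dnmx0 => /dnmx_inj [*]; split; lra.
rewrite stab_lie_z2P memv_span2.
split=> [[a [b [e [k [T -> /upper_conj_s2n001 ke]]]]] | [k1 [k2 ->]]].
  by exists e, b; rewrite !scale_dnmx !add_dnmx; congr dnmx; lra.
rewrite !scale_dnmx !add_dnmx; do 4 eexists; split; [| reflexivity | apply/upper_conj_s2n001]; ring.
Qed.

Lemma orbit_dim_zt2 : orbit_dim zt2 5.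
Proof. exact/orbit_dim_z2_full/upper_conj_s2n000. Qed.

Lemma not_same_orbit_z2 w w' :
  inG w -> inG w' ->
  (forall a b e k, upper (w *m dnmx a b e k *m invmx w') -> k = 0) ->
  ~ same_orbit (base_pt (z2 R) w) (base_pt (z2 R) w').
Proof.
move=> Gw Gw' k0; rewrite same_orbit_z2P // => -[a [b [e [k [D /k0 k_eq0]]]]].
by have [_ _] := mul3_eq1_neq0 D; rewrite k_eq0 eqxx.
Qed.

Lemma not_same_orbit_zz1_zz2 : ~ same_orbit zz1 zz2.
Proof.
apply: not_same_orbit_z2; try exact: inG_z2nmx.
by move=> a b e k; mx3_expand; case/upper_mx3=> *; lra.
Qed.

Lemma not_same_orbit_zz1_zz3 : ~ same_orbit zz1 zz3.
Proof.
apply: not_same_orbit_z2; try exact: inG_z2nmx.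
by move=> a b e k; mx3_expand; case/upper_mx3=> *; lra.
Qed.

Lemma not_same_orbit_zz2_zz3 : ~ same_orbit zz2 zz3.
Proof.
apply: not_same_orbit_z2; try exact: inG_z2nmx.
by move=> a b e k; mx3_expand; case/upper_mx3=> *; lra.
Qed.

Lemma not_same_orbit_zt1_zt2 : ~ same_orbit zt1 zt2.
Proof.
apply: not_same_orbit_z2; try exact: inG_s2nmx.
by move=> a b e k; mx3_expand; case/upper_mx3=> *; lra.
Qed.

Lemma same_orbit_z2z2_reps r : inP r ->
  [\/ same_orbit (base_pt (z2 R) (z2 R *m r)) zz1,
      same_orbit (base_pt (z2 R) (z2 R *m r)) zz2 |
      same_orbit (base_pt (z2 R) (z2 R *m r)) zz3].
Proof.
move=> Pr; have Gzr : inG (z2 R *m r) by apply: inG_mul; [exact: inG_z2 | case: Pr].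
case/inP_coords: Pr Gzr => a [b [c [e [f [k [D ->]]]]]] Gzr.
have [a0 e0 _] := mul3_eq1_neq0 D.
(* Right multiplication by [dnmx _ _ _ 1] keeps the last column (c, f, k) of r;
   whether f, and then c, vanishes decides the orbit. *)
have [f0 | f0] := eqVneq f 0; last first.
  apply/Or31/(same_orbit_z2P Gzr (inG_z2nmx 0 0 1)).
  exists (e / f), ((c - b * (f / e)) / a), (f / e), 1.
  split; first by field; rewrite f0 e0.
  by mx3_expand; apply/upper_mx3; split; field; rewrite ?a0 ?e0 ?f0.
subst f; have [c0 | c0] := eqVneq c 0; last first.
  apply/Or32/(same_orbit_z2P Gzr (inG_z2nmx 0 1 0)); exists (c / a), 0, (a / c), 1.
  split; first by field; rewrite a0 c0.
  by mx3_expand; apply/upper_mx3; split; field; rewrite ?a0 ?c0.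
subst c; apply/Or33/(same_orbit_z2P Gzr (inG_z2nmx 0 0 0)).
by exists 1, 0, 1, 1; rewrite !mulr1; split=> //; mx3_expand; apply/upper_mx3; split; ring.
Qed.

Lemma same_orbit_z2s1_rep r : inP r -> same_orbit (base_pt (z2 R) (s1 R *m r)) zs.
Proof.
move=> Pr; have Gsr : inG (s1 R *m r) by apply: inG_mul; [exact: inG_s1 | case: Pr].
case/inP_coords: Pr Gsr => a [b [c [e [f [k [D ->]]]]]] Gsr.
have [a0 _ _] := mul3_eq1_neq0 D.
apply/(same_orbit_z2P Gsr inG_s1); exists 1, (- b / a), 1, 1; rewrite !mulr1; split=> //.
by mx3_expand; apply/upper_mx3; split; field.
Qed.

Lemma same_orbit_z21_rep r : inP r -> same_orbit (base_pt (z2 R) (1%:M *m r)) z1.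
Proof.
move=> [Gr Ur]; rewrite mul1mx; apply/(same_orbit_z2P Gr (inG1 R)).
exists 1, 0, 1, 1; rewrite !mulr1; split=> //.
have -> : dnmx 1 0 1 1 = 1%:M by rewrite mx3_1.
by rewrite invmx1 !mulmx1.
Qed.

Lemma same_orbit_z2s2_reps r : inP r ->
  same_orbit (base_pt (z2 R) (s2 R *m r)) zt1 \/ same_orbit (base_pt (z2 R) (s2 R *m r)) zt2.
Proof.
move=> Pr; have Gsr : inG (s2 R *m r) by apply: inG_mul; [exact: inG_s2 | case: Pr].
case/inP_coords: Pr Gsr => a [b [c [e [f [k [D ->]]]]]] Gsr.
have [_ e0 _] := mul3_eq1_neq0 D.
have [f0 | f0] := eqVneq f 0; last first.
  left; apply/(same_orbit_z2P Gsr (inG_s2nmx 0 0 1)); exists (e / f), 0, (f / e), 1.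
  split; first by field; rewrite e0 f0.
  by mx3_expand; apply/upper_mx3; split; field; rewrite ?e0 ?f0.
subst f; right; apply/(same_orbit_z2P Gsr (inG_s2nmx 0 0 0)); exists 1, 0, 1, 1.
by rewrite !mulr1; split=> //; mx3_expand; apply/upper_mx3; split; ring.
Qed.

Lemma in_cell_z2z2 x : is_pt x ->
  in_cell (z2 R) (z2 R) x <-> same_orbit x zz1 \/ same_orbit x zz2 \/ same_orbit x zz3.
Proof.
move=> px; rewrite (in_cellP inG_z2 inG_z2 px); split=> [[r Pr Sx] | ].
  have py : is_pt (base_pt (z2 R) (z2 R *m r)) by apply/is_pt_z2/inG_mul/Pr.1/inG_z2.
  case: (same_orbit_z2z2_reps Pr) => S; [left | right; left | right; right];
    exact: same_orbit_trans py (is_pt_z2 (inG_z2nmx _ _ _)) Sx S.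
by case=> [S | [S | S]]; eexists; try exact: S; exact: inP_nmx.
Qed.

Lemma in_cell_z2s1 x : is_pt x -> in_cell (z2 R) (s1 R) x <-> same_orbit x zs.
Proof.
move=> px; rewrite (in_cellP inG_z2 inG_s1 px); split=> [[r Pr Sx] | S].
  have py : is_pt (base_pt (z2 R) (s1 R *m r)) by apply/is_pt_z2/inG_mul/Pr.1/inG_s1.
  exact: same_orbit_trans py (is_pt_z2 inG_s1) Sx (same_orbit_z2s1_rep Pr).
by exists 1%:M; [exact: inP1 | rewrite mulmx1].
Qed.

Lemma in_cell_z21 x : is_pt x -> in_cell (z2 R) 1%:M x <-> same_orbit x z1.
Proof.
move=> px; rewrite (in_cellP inG_z2 (inG1 R) px); split=> [[r Pr Sx] | S].
  have py : is_pt (base_pt (z2 R) (1%:M *m r)) by apply/is_pt_z2/inG_mul/Pr.1/inG1.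
  exact: same_orbit_trans py (is_pt_z2 (inG1 R)) Sx (same_orbit_z21_rep Pr).
by exists 1%:M; [exact: inP1 | rewrite mulmx1].
Qed.

Lemma in_cell_z2s2 x : is_pt x ->
  in_cell (z2 R) (s2 R) x <-> same_orbit x zt1 \/ same_orbit x zt2.
Proof.
move=> px; rewrite (in_cellP inG_z2 inG_s2 px); split=> [[r Pr Sx] | ].
  have py : is_pt (base_pt (z2 R) (s2 R *m r)) by apply/is_pt_z2/inG_mul/Pr.1/inG_s2.
  case: (same_orbit_z2s2_reps Pr) => S; [left | right];
    exact: same_orbit_trans py (is_pt_z2 (inG_s2nmx _ _ _)) Sx S.
by case=> S; eexists; try exact: S; exact: inP_nmx.
Qed.

End Z2Cells.

Theorem mainTheorem10 (R : realType) :
  let zz1 := base_pt (z2 R) (z2 R *m nmx 0 0 1) in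
  let zz2 := base_pt (z2 R) (z2 R *m nmx 0 1 0) in
  let zz3 := base_pt (z2 R) (z2 R *m nmx 0 0 0) in
  let zs := base_pt (z2 R) (s1 R) in
  let z1 := base_pt (z2 R) 1%:M in
  let zt1 := base_pt (z2 R) (s2 R *m nmx 0 0 1) in
  let zt2 := base_pt (z2 R) (s2 R *m nmx 0 0 0) in
  let DN := fun g : 'M[R]_3 =>
    exists d x, inD d /\ g = d *m nmx x 0 0 in
  (* (a) *)
  ((forall x, is_pt x ->
      (in_cell (z2 R) (z2 R) x <->
        same_orbit x zz1 \/ same_orbit x zz2 \/ same_orbit x zz3))
   /\ ~ same_orbit zz1 zz2 /\ ~ same_orbit zz1 zz3 /\ ~ same_orbit zz2 zz3
   /\ orbit_dim zz1 7 /\ orbit_dim zz2 6 /\ orbit_dim zz3 5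
   /\ (forall g, stab zz1 g <-> exists a : R, a != 0 /\ g = dmx (a ^-2) a a)
   /\ (forall g, stab zz2 g <->
         exists a z : R, a != 0 /\ g = mx3 a z 0 0 (a ^-2) 0 0 0 a)
   /\ (forall g, stab zz3 g <-> DN g))
  /\
  (* (b) *)
  ((forall x, is_pt x -> (in_cell (z2 R) (s1 R) x <-> same_orbit x zs))
   /\ orbit_dim zs 6 /\ (forall g, stab zs g <-> inD g)
   /\ (forall x, is_pt x -> (in_cell (z2 R) 1%:M x <-> same_orbit x z1))
   /\ orbit_dim z1 5 /\ (forall g, stab z1 g <-> DN g))
  /\
  (* (c) *)
  ((forall x, is_pt x ->
      (in_cell (z2 R) (s2 R) x <-> same_orbit x zt1 \/ same_orbit x zt2))
   /\ ~ same_orbit zt1 zt2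
   /\ orbit_dim zt1 6 /\ orbit_dim zt2 5
   /\ (forall g, stab zt1 g <->
         exists a x : R, a != 0 /\ g = mx3 (a ^-2) x 0 0 a 0 0 0 a)
   /\ (forall g, stab zt2 g <-> DN g)).
Proof.
move=> zz1 zz2 zz3 zs z1 zt1 zt2 DN.
split; [|split].
- split; first exact: in_cell_z2z2.
  split; first exact: not_same_orbit_zz1_zz2.
  split; first exact: not_same_orbit_zz1_zz3.
  split; first exact: not_same_orbit_zz2_zz3.
  split; first exact: orbit_dim_zz1.
  split; first exact: orbit_dim_zz2.
  split; first exact: orbit_dim_zz3.
  split; first exact: stab_zz1.
  split; first exact: stab_zz2.
  exact: stab_zz3.
- split; first exact: in_cell_z2s1.
  split; first exact: orbit_dim_zs.
  split; first exact: stab_zs.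
  split; first exact: in_cell_z21.
  split; first exact: orbit_dim_z1.
  exact: stab_z1.
- split; first exact: in_cell_z2s2.
  split; first exact: not_same_orbit_zt1_zt2.
  split; first exact: orbit_dim_zt1.
  split; first exact: orbit_dim_zt2.
  split; first exact: stab_zt1.
  exact: stab_zt2.
Qed.
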